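(* Let $\sigma_0,\sigma_\epsilon>0$, $\theta_0\in\mathbb{R}$, prior $\Theta\sim N(\theta_0,\sigma_0^2)$, signal $X=\Theta+\epsilon$ with $\epsilon\sim\mathrm{Cauchy}(0,\sigma_\epsilon)$ independent of $\Theta$, and let $\theta_1(x)=\mathbb{E}[\Theta\mid X=x]$. With $a=\sigma_\epsilon/\sigma_0$, the DeGroot coefficient $\omega=\frac{d\theta_1}{dx}\big|_{x=\theta_0}$ is $$\omega=1+a^2-\sqrt{\frac{2}{\pi}}\,\frac{a}{\operatorname{erfcx}(a/\sqrt2)},$$ where $\operatorname{erfcx}(y)=e^{y^2}\bigl(1-\frac{2}{\sqrt\pi}\int_0^y e^{-t^2}dt\bigr)$.
   Context: $\mathrm{Cauchy}(\mu,s)$ has density $t\mapsto\frac{1}{\pi s[1+((t-\mu)/s)^2]}$. The posterior mean is $\theta_1(x)=\frac{\int\theta f_\Theta(\theta)l_\epsilon(x-\theta)d\theta}{\int f_\Theta(\theta)l_\epsilon(x-\theta)d\theta}$. The DeGroot coefficient is the slope of the posterior mean in the signal at $x=\theta_0$ (local linearization $\theta_1\approx\theta_0+\omega(x-\theta_0)$). *)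

From Stdlib Require Import Reals.
From Coquelicot Require Import Coquelicot.
Open Scope R_scope.

Definition normal_pdf (m s t : R) : R :=
  / (s * sqrt (2 * PI)) * exp (- ((t - m) ^ 2) / (2 * s ^ 2)).

Definition cauchy_pdf (mu s t : R) : R :=
  / (PI * s * (1 + ((t - mu) / s) ^ 2)).

Definition integral_R (f : R -> R) : R :=
  RInt_gen f (Rbar_locally m_infty) (Rbar_locally p_infty).

(* Posterior mean theta_1(x) = E[Theta | X = x] for prior N(th0, s0^2) and
   additive independent Cauchy(0, se) noise, via Bayes' formula. *)
Definition posterior_mean (th0 s0 se x : R) : R :=
  integral_R (fun th => th * normal_pdf th0 s0 th * cauchy_pdf 0 se (x - th))
  / integral_R (fun th => normal_pdf th0 s0 th * cauchy_pdf 0 se (x - th)).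

Definition erfcx (y : R) : R :=
  exp (y ^ 2) * (1 - 2 / sqrt PI * RInt (fun t => exp (- t ^ 2)) 0 y).

From Stdlib Require Import Reals Lra Psatz Classical_Prop.
From Coquelicot Require Import Coquelicot.
Open Scope R_scope.

(* Substituting [th = th0 + s0 w], the posterior mean is N(x) / D(x), where N and D
   integrate [(s0 w + th0) phi(w)] and [phi(w)] against the Cauchy kernel
   [K(x - th0 - s0 w)], phi being the standard normal density.  K and its first two
   derivatives are bounded and the Gaussian factors are O(1 / (1 + w^2)), so both
   integrals may be differentiated under the integral sign.  At [x = th0] symmetry in
   [w] kills D'(th0) and the odd part of N(th0), so the slope is N'(th0) / D(th0).
   There K(-s0 w) is a multiple of [1 / (a^2 + w^2)], and the two remaining integrals,
   of [exp (-w^2/2) / (a^2 + w^2)] and (after an integration by parts) of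
   [w^2 exp (-w^2/2) / (a^2 + w^2)^2], reduce to Feynman's integral
   [L y = int exp (-y^2 (1 + u^2)) / (1 + u^2) du] at [y = a / sqrt 2].  Since
   [L y + 2 G int_0^y exp (-t^2) dt] is constant (G the Gaussian integral), equal to
   [PI] as [y -> 0] and to [G^2] as [y -> +oo], one gets [G = sqrt PI] and
   [L y = PI exp (-y^2) erfcx y]. *)

(* Coquelicot states these over an abstract normed module, so [rewrite] does not
   see [Rmult] and [Rplus] in them; the instances at [R] below do. *)
Lemma ex_RInt_continuous_R (f : R -> R) a b :
  (forall x, continuous f x) -> ex_RInt f a b.
Proof.
  intros H. apply (ex_RInt_continuous (V := R_CompleteNormedModule)).
  intros; apply H.
Qed.

Lemma ex_derive_continuous_R (f : R -> R) x : ex_derive f x -> continuous f x.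
Proof. apply (ex_derive_continuous (K := R_AbsRing) (V := R_NormedModule)). Qed.

Lemma RInt_scal_R (f : R -> R) a b k :
  ex_RInt f a b -> RInt (fun x => k * f x) a b = k * RInt f a b.
Proof. intros H. exact (RInt_scal f a b k H). Qed.

Lemma RInt_plus_R (f g : R -> R) a b : ex_RInt f a b -> ex_RInt g a b ->
  RInt (fun x => f x + g x) a b = RInt f a b + RInt g a b.
Proof. intros Hf Hg. exact (RInt_plus f g a b Hf Hg). Qed.

Lemma RInt_minus_R (f g : R -> R) a b : ex_RInt f a b -> ex_RInt g a b ->
  RInt (fun x => f x - g x) a b = RInt f a b - RInt g a b.
Proof. intros Hf Hg. exact (RInt_minus f g a b Hf Hg). Qed.

Lemma RInt_const_R (c a b : R) : RInt (fun _ => c) a b = (b - a) * c.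
Proof. apply (RInt_const (V := R_CompleteNormedModule)). Qed.

Lemma RInt_ext_R (f g : R -> R) a b :
  (forall x, f x = g x) -> RInt f a b = RInt g a b.
Proof. intros H. apply RInt_ext. intros; apply H. Qed.

Lemma RInt_comp_opp_R (f : R -> R) a b : ex_RInt f (- a) (- b) ->
  RInt (fun x => f (- x)) a b = RInt f (- b) (- a).
Proof.
  intros H.
  assert (-1 * a + 0 = - a /\ -1 * b + 0 = - b) as [Ha Hb] by (split; ring).
  assert (Hc : ex_RInt (fun x => -1 * f (-1 * x + 0)) a b)
    by (apply (ex_RInt_comp_lin f); rewrite Ha, Hb; exact H).
  assert (E : RInt (fun x => -1 * f (-1 * x + 0)) a b = RInt f (- a) (- b)).
  { pose proof (RInt_comp_lin f (-1) 0 a b) as E. rewrite Ha, Hb in E. exact (E H). }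
  assert (S : - RInt f (- a) (- b) = RInt f (- b) (- a))
    by exact (opp_RInt_swap f _ _ H).
  rewrite (RInt_ext_R _ (fun x => -1 * (-1 * f (-1 * x + 0))))
    by (intros x; replace (-1 * x + 0) with (- x) by ring; ring).
  rewrite RInt_scal_R, E by exact Hc. lra.
Qed.

Lemma is_derive_eq (f : R -> R) x (l l' : R) :
  is_derive f x l -> l = l' -> is_derive f x l'.
Proof. intros H <-; exact H. Qed.

Lemma is_derive_comp_sub (k : R -> R) dk v t :
  is_derive k (t - v) dk -> is_derive (fun x => k (x - v)) t dk.
Proof.
  intros H. eapply is_derive_eq.
  - apply (is_derive_comp k (fun x => x - v)); [exact H|].
    apply (is_derive_minus (K := R_AbsRing) (V := R_NormedModule));
      [apply is_derive_id | apply is_derive_const].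
  - unfold scal, minus, plus, opp, one, zero; simpl; unfold mult; simpl. ring.
Qed.

(** * Improper integrals over the real line *)

Definition is_RInt_line (f : R -> R) (l : R) :=
  (forall a b, ex_RInt f a b) /\
  forall eps, 0 < eps -> exists M, forall a b, a <= - M -> M <= b ->
    Rabs (RInt f a b - l) <= eps.

Lemma integral_R_unique f l : is_RInt_line f l -> integral_R f = l.
Proof.
  intros [Hex Hc]. unfold integral_R. apply is_RInt_gen_unique.
  intros P [eps HP].
  destruct (Hc (eps / 2)) as [M HM]. { destruct eps; simpl; lra. }
  exists (fun a => a < - M) (fun b => M < b).
  - exists (- M). auto.
  - exists M. auto.
  - intros a b Ha Hb. exists (RInt f a b). split.
    + apply RInt_correct, Hex.
    + apply HP. change (Rabs (RInt f a b - l) < eps).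
      pose proof (HM a b ltac:(lra) ltac:(lra)). destruct eps; simpl in *. lra.
Qed.

Lemma is_RInt_line_ext f g l :
  (forall x, f x = g x) -> is_RInt_line f l -> is_RInt_line g l.
Proof.
  intros E [Hex Hc]. split.
  - intros a b. apply (ex_RInt_ext f); auto.
  - intros eps Heps. destruct (Hc eps Heps) as [M HM]. exists M. intros a b Ha Hb.
    rewrite <- (RInt_ext_R f g) by exact E. auto.
Qed.

Lemma is_RInt_line_plus f g l m :
  is_RInt_line f l -> is_RInt_line g m -> is_RInt_line (fun x => f x + g x) (l + m).
Proof.
  intros [Hf Cf] [Hg Cg]. split.
  - intros a b. exact (ex_RInt_plus f g a b (Hf a b) (Hg a b)).
  - intros eps Heps.
    destruct (Cf (eps / 2)) as [M1 H1]; [lra|].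
    destruct (Cg (eps / 2)) as [M2 H2]; [lra|].
    exists (Rmax M1 M2). intros a b Ha Hb.
    pose proof (Rmax_l M1 M2); pose proof (Rmax_r M1 M2).
    specialize (H1 a b ltac:(lra) ltac:(lra)). specialize (H2 a b ltac:(lra) ltac:(lra)).
    rewrite RInt_plus_R by auto.
    revert H1 H2. unfold Rabs; repeat destruct Rcase_abs; lra.
Qed.

Lemma is_RInt_line_scal f l k :
  is_RInt_line f l -> is_RInt_line (fun x => k * f x) (k * l).
Proof.
  intros [Hf Cf]. split.
  - intros a b. exact (ex_RInt_scal f a b k (Hf a b)).
  - intros eps Heps.
    destruct (Cf (eps / (Rabs k + 1))) as [M HM].
    { apply Rdiv_lt_0_compat; [|pose proof (Rabs_pos k)]; lra. }
    exists M. intros a b Ha Hb. specialize (HM a b Ha Hb).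
    rewrite RInt_scal_R by auto.
    replace (k * RInt f a b - k * l) with (k * (RInt f a b - l)) by ring.
    rewrite Rabs_mult.
    apply Rle_trans with ((Rabs k + 1) * (eps / (Rabs k + 1))).
    + apply Rmult_le_compat; try apply Rabs_pos; lra.
    + right; field. pose proof (Rabs_pos k); lra.
Qed.

Lemma is_RInt_line_minus f g l m :
  is_RInt_line f l -> is_RInt_line g m -> is_RInt_line (fun x => f x - g x) (l - m).
Proof.
  intros Hf Hg. replace (l - m) with (l + -1 * m) by ring.
  apply (is_RInt_line_ext (fun x => f x + -1 * g x)); [intros; ring|].
  apply is_RInt_line_plus, is_RInt_line_scal; auto.
Qed.

Lemma is_RInt_line_le f g l m :
  is_RInt_line f l -> is_RInt_line g m -> (forall x, f x <= g x) -> l <= m.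
Proof.
  intros [Hf Cf] [Hg Cg] Hle. apply Rnot_lt_le. intros Hlt.
  destruct (Cf ((l - m) / 3)) as [M1 H1]; [lra|].
  destruct (Cg ((l - m) / 3)) as [M2 H2]; [lra|].
  set (M := Rmax (Rmax M1 M2) 0).
  pose proof (Rmax_l M1 M2); pose proof (Rmax_r M1 M2).
  pose proof (Rmax_l (Rmax M1 M2) 0); pose proof (Rmax_r (Rmax M1 M2) 0).
  specialize (H1 (- M) M ltac:(unfold M; lra) ltac:(unfold M; lra)).
  specialize (H2 (- M) M ltac:(unfold M; lra) ltac:(unfold M; lra)).
  assert (RInt f (- M) M <= RInt g (- M) M) by (apply RInt_le; auto; unfold M; lra).
  revert H1 H2. unfold Rabs; repeat destruct Rcase_abs; lra.
Qed.

Lemma RInt_le_RInt_nonneg f a b a' b' :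
  (forall x, 0 <= f x) -> (forall a b, ex_RInt f a b) ->
  a' <= a -> a <= b -> b <= b' -> RInt f a b <= RInt f a' b'.
Proof.
  intros Hp He H1 H2 H3.
  rewrite <- (RInt_Chasles f a' a b'), <- (RInt_Chasles f a b b') by auto.
  assert (0 <= RInt f a' a) by (apply RInt_ge_0; auto).
  assert (0 <= RInt f b b') by (apply RInt_ge_0; auto).
  change plus with Rplus. lra.
Qed.

Lemma is_RInt_line_RInt_le f l :
  (forall x, 0 <= f x) -> is_RInt_line f l -> forall a b, a <= b -> RInt f a b <= l.
Proof.
  intros Hp [Hf Cf] a b Hab. apply Rnot_lt_le. intros Hlt.
  destruct (Cf ((RInt f a b - l) / 2)) as [M HM]; [lra|].
  set (M' := Rmax M (Rmax (Rabs a) (Rabs b))).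
  pose proof (Rmax_l M (Rmax (Rabs a) (Rabs b))).
  pose proof (Rmax_r M (Rmax (Rabs a) (Rabs b))).
  pose proof (Rmax_l (Rabs a) (Rabs b)); pose proof (Rmax_r (Rabs a) (Rabs b)).
  pose proof (Rle_abs b); pose proof (Rle_abs (- a)); rewrite Rabs_Ropp in *.
  specialize (HM (- M') M' ltac:(unfold M'; lra) ltac:(unfold M'; lra)).
  assert (RInt f a b <= RInt f (- M') M')
    by (apply RInt_le_RInt_nonneg; auto; unfold M'; lra).
  revert HM. unfold Rabs at 1; destruct Rcase_abs; lra.
Qed.

Lemma is_RInt_line_ge0 f l : (forall x, 0 <= f x) -> is_RInt_line f l -> 0 <= l.
Proof.
  intros Hp H. apply Rle_trans with (RInt f 0 0).
  - rewrite RInt_point. apply Rle_refl.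
  - apply (is_RInt_line_RInt_le f); auto; lra.
Qed.

Lemma is_RInt_line_comp_lin f l s m :
  is_RInt_line f l -> 0 < s -> is_RInt_line (fun w => s * f (s * w + m)) l.
Proof.
  intros [Hf Cf] Hs. split.
  - intros a b. apply (ex_RInt_comp_lin f s m a b), Hf.
  - intros eps Heps. destruct (Cf eps Heps) as [M HM].
    exists ((Rabs M + Rabs m) / s). intros a b Ha Hb.
    assert (E : RInt (fun w => s * f (s * w + m)) a b = RInt f (s * a + m) (s * b + m))
      by exact (RInt_comp_lin f s m a b (Hf _ _)).
    rewrite E. apply HM.
    + apply (Rmult_le_compat_l s) in Ha; [|lra].
      replace (s * - ((Rabs M + Rabs m) / s)) with (- (Rabs M + Rabs m)) in Ha
        by (field; lra).
      pose proof (Rle_abs m); pose proof (Rle_abs M). lra.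
    + apply (Rmult_le_compat_l s) in Hb; [|lra].
      replace (s * ((Rabs M + Rabs m) / s)) with (Rabs M + Rabs m) in Hb by (field; lra).
      pose proof (Rle_abs (- m)); pose proof (Rle_abs M). rewrite Rabs_Ropp in *. lra.
Qed.

Lemma is_RInt_line_comp_lin_inv f l s m :
  0 < s -> is_RInt_line (fun w => s * f (s * w + m)) l -> is_RInt_line f l.
Proof.
  intros Hs H.
  apply (is_RInt_line_ext (fun t => / s * (s * f (s * (/ s * t + - m / s) + m)))).
  { intros t. replace (s * (/ s * t + - m / s) + m) with t by (field; lra). field; lra. }
  apply (is_RInt_line_comp_lin (fun w => s * f (s * w + m))); auto.
  apply Rinv_0_lt_compat; auto.
Qed.

Lemma is_RInt_line_odd f l : (forall x, f (- x) = - f x) -> is_RInt_line f l -> l = 0.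
Proof.
  intros Ho [Hf Cf]. apply Req_le_aux. intros [eps Heps]; simpl.
  destruct (Cf eps Heps) as [M HM].
  assert (Hsym : RInt f (- Rabs M) (Rabs M) = 0).
  { assert (E := RInt_comp_opp_R f (- Rabs M) (Rabs M) (Hf _ _)).
    rewrite Ropp_involutive in E.
    rewrite (RInt_ext_R _ (fun x => -1 * f x)) in E by (intros; rewrite Ho; ring).
    rewrite RInt_scal_R in E by auto. lra. }
  pose proof (Rle_abs M); pose proof (Rle_abs (- M)); rewrite Rabs_Ropp in *.
  specialize (HM (- Rabs M) (Rabs M) ltac:(lra) ltac:(lra)).
  rewrite Hsym, Rminus_0_l, Rabs_Ropp in HM. rewrite Rminus_0_r. exact HM.
Qed.

Lemma ex_is_RInt_line_nonneg f :
  (forall x, continuous f x) -> (forall x, 0 <= f x) ->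
  (exists C, forall a b, a <= b -> RInt f a b <= C) -> exists l, is_RInt_line f l.
Proof.
  intros Hc Hp [C HC].
  assert (Hf : forall a b, ex_RInt f a b) by (intros; apply ex_RInt_continuous_R, Hc).
  set (E := fun r => exists a b, a <= b /\ r = RInt f a b).
  destruct (completeness E) as [L [HL1 HL2]].
  { exists C. intros r [a [b [Hab ->]]]. auto. }
  { exists (RInt f 0 0), 0, 0. split; auto; lra. }
  exists L. split; auto.
  intros eps Heps.
  assert (exists a0 b0, a0 <= b0 /\ L - eps < RInt f a0 b0) as [a0 [b0 [Hab H0]]].
  { apply NNPP. intros Hn.
    assert (L <= L - eps); [|lra].
    apply HL2. intros r [a [b [Hab ->]]]. apply Rnot_lt_le. intros Hlt.
    apply Hn. exists a, b. auto. }
  exists (Rmax (Rabs a0) (Rabs b0)). intros a b Ha Hb.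
  pose proof (Rmax_l (Rabs a0) (Rabs b0)); pose proof (Rmax_r (Rabs a0) (Rabs b0)).
  pose proof (Rle_abs b0); pose proof (Rle_abs (- a0)); rewrite Rabs_Ropp in *.
  assert (RInt f a0 b0 <= RInt f a b) by (apply RInt_le_RInt_nonneg; auto; lra).
  assert (RInt f a b <= L) by (apply HL1; exists a, b; split; auto; lra).
  unfold Rabs; destruct Rcase_abs; lra.
Qed.

Definition inv_1_plus_sq (u : R) := / (1 + u ^ 2).

Lemma inv_1_plus_sq_pos u : 0 < inv_1_plus_sq u.
Proof. apply Rinv_0_lt_compat. nra. Qed.

Lemma inv_1_plus_sq_continuous u : continuous inv_1_plus_sq u.
Proof. apply ex_derive_continuous_R. unfold inv_1_plus_sq. auto_derive. nra. Qed.

Lemma RInt_inv_1_plus_sq a b : RInt inv_1_plus_sq a b = atan b - atan a.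
Proof.
  apply is_RInt_unique, (is_RInt_derive atan inv_1_plus_sq).
  - intros x _. unfold inv_1_plus_sq. replace (x ^ 2) with (Rsqr x) by (unfold Rsqr; ring).
    apply is_derive_atan.
  - intros x _. apply inv_1_plus_sq_continuous.
Qed.

Lemma atan_le_id y : 0 <= y -> atan y <= y.
Proof.
  intros Hy. rewrite <- (Rminus_0_r (atan y)), <- atan_0, <- RInt_inv_1_plus_sq.
  apply Rle_trans with (RInt (fun _ => 1) 0 y).
  - apply RInt_le; auto.
    + apply ex_RInt_continuous_R, inv_1_plus_sq_continuous.
    + apply ex_RInt_const.
    + intros x Hx. unfold inv_1_plus_sq. rewrite <- Rinv_1. apply Rinv_le_contravar; nra.
  - rewrite RInt_const_R. lra.
Qed.

Lemma atan_ge_PI2_minus_inv b : 0 < b -> PI / 2 - / b <= atan b.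
Proof.
  intros Hb. pose proof (atan_inv b Hb). pose proof (atan_le_id (/ b)).
  assert (0 < / b) by (apply Rinv_0_lt_compat; auto). lra.
Qed.

Lemma is_RInt_line_inv_1_plus_sq : is_RInt_line inv_1_plus_sq PI.
Proof.
  split; [intros; apply ex_RInt_continuous_R, inv_1_plus_sq_continuous|].
  intros eps Heps. exists (Rmax 1 (2 / eps)). intros a b Ha Hb.
  pose proof (Rmax_l 1 (2 / eps)); pose proof (Rmax_r 1 (2 / eps)).
  assert (0 < 2 / eps) by (apply Rdiv_lt_0_compat; lra).
  rewrite RInt_inv_1_plus_sq.
  pose proof (atan_ge_PI2_minus_inv b ltac:(lra)).
  pose proof (atan_ge_PI2_minus_inv (- a) ltac:(lra)). rewrite atan_opp in *.
  pose proof (atan_bound a); pose proof (atan_bound b).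
  assert (/ b <= eps / 2 /\ / (- a) <= eps / 2) as [].
  { replace (eps / 2) with (/ (2 / eps)) by (field; lra).
    split; apply Rinv_le_contravar; lra. }
  unfold Rabs; destruct Rcase_abs; lra.
Qed.

Lemma ex_is_RInt_line_dominated (f : R -> R) C :
  (forall x, continuous f x) -> (forall x, Rabs (f x) <= C * inv_1_plus_sq x) ->
  exists l, is_RInt_line f l.
Proof.
  intros Hc Hd.
  assert (HC : 0 <= C).
  { specialize (Hd 0). pose proof (inv_1_plus_sq_pos 0). pose proof (Rabs_pos (f 0)). nra. }
  assert (Hgc : forall x, continuous (fun x => f x + C * inv_1_plus_sq x) x).
  { intros x. apply (continuous_plus f); [apply Hc|].
    apply (continuous_scal_r C inv_1_plus_sq), inv_1_plus_sq_continuous. }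
  assert (Hg : exists l, is_RInt_line (fun x => f x + C * inv_1_plus_sq x) l).
  { apply ex_is_RInt_line_nonneg; auto.
    - intros x. specialize (Hd x). revert Hd. unfold Rabs; destruct Rcase_abs; lra.
    - exists (2 * C * PI). intros a b Hab.
      apply Rle_trans with (RInt (fun x => 2 * C * inv_1_plus_sq x) a b).
      + apply RInt_le; auto.
        * apply ex_RInt_continuous_R, Hgc.
        * exact (ex_RInt_scal inv_1_plus_sq a b (2 * C)
            (ex_RInt_continuous_R _ a b inv_1_plus_sq_continuous)).
        * intros x _. specialize (Hd x). revert Hd. unfold Rabs; destruct Rcase_abs; lra.
      + rewrite RInt_scal_R by apply ex_RInt_continuous_R, inv_1_plus_sq_continuous.
        apply Rmult_le_compat_l; [lra|].
        apply (is_RInt_line_RInt_le inv_1_plus_sq); auto.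
        * intros x; apply Rlt_le, inv_1_plus_sq_pos.
        * apply is_RInt_line_inv_1_plus_sq. }
  destruct Hg as [l Hl]. exists (l - C * PI).
  apply (is_RInt_line_ext (fun x => (f x + C * inv_1_plus_sq x) - C * inv_1_plus_sq x));
    [intros; ring|].
  apply is_RInt_line_minus, is_RInt_line_scal, is_RInt_line_inv_1_plus_sq; auto.
Qed.

Lemma is_RInt_line_derive_vanishing (P p : R -> R) :
  (forall x, is_derive P x (p x)) -> (forall x, continuous p x) ->
  (forall eps, 0 < eps -> exists M, forall x, M <= Rabs x -> Rabs (P x) <= eps) ->
  is_RInt_line p 0.
Proof.
  intros Hd Hc Hlim. split; [intros; apply ex_RInt_continuous_R, Hc|].
  intros eps Heps. destruct (Hlim (eps / 2)) as [M HM]; [lra|].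
  exists (Rabs M). intros a b Ha Hb.
  assert (H : RInt p a b = P b - P a).
  { apply is_RInt_unique, (is_RInt_derive (V := R_CompleteNormedModule) P p); auto. }
  rewrite H. pose proof (Rle_abs M); pose proof (Rabs_pos M).
  assert (HA : Rabs (P a) <= eps / 2) by (apply HM; rewrite Rabs_left1; lra).
  assert (HB : Rabs (P b) <= eps / 2) by (apply HM; rewrite Rabs_right; lra).
  revert HA HB. unfold Rabs; repeat destruct Rcase_abs; lra.
Qed.

Lemma ex_is_RInt_line_mul_bounded (g h : R -> R) C B :
  (forall u, continuous g u) -> (forall u, continuous h u) ->
  (forall u, Rabs (g u) <= C * inv_1_plus_sq u) -> (forall u, Rabs (h u) <= B) ->
  exists l, is_RInt_line (fun u => g u * h u) l.
Proof.
  intros Hgc Hhc Hg Hh. apply (ex_is_RInt_line_dominated _ (C * B)).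
  - intros u. apply (continuous_mult (K := R_AbsRing) g h); auto.
  - intros u. rewrite Rabs_mult.
    replace (C * B * inv_1_plus_sq u) with (C * inv_1_plus_sq u * B) by ring.
    apply Rmult_le_compat; auto using Rabs_pos.
Qed.

(** * Differentiation under the integral sign *)

Lemma MVT_abs_le (f df : R -> R) a b B :
  (forall t, Rmin a b <= t <= Rmax a b -> is_derive f t (df t)) ->
  (forall t, Rmin a b <= t <= Rmax a b -> Rabs (df t) <= B) ->
  Rabs (f b - f a) <= B * Rabs (b - a).
Proof.
  intros Hd Hb.
  destruct (MVT_gen f a b df) as [c [Hc ->]].
  - intros x Hx. apply Hd. lra.
  - intros x Hx. apply continuity_pt_filterlim, ex_derive_continuous_R.
    eexists. apply Hd, Hx.
  - rewrite Rabs_mult. apply Rmult_le_compat_r; [apply Rabs_pos | apply Hb, Hc].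
Qed.

Lemma Rabs_le_between a b t : Rmin a b <= t <= Rmax a b -> Rabs (t - a) <= Rabs (b - a).
Proof.
  unfold Rmin, Rmax, Rabs. intros.
  repeat destruct Rle_dec; repeat destruct Rcase_abs; lra.
Qed.

Lemma taylor2_remainder_le (f f1 f2 : R -> R) x0 d B h :
  (forall t, Rabs (t - x0) <= d ->
     is_derive f t (f1 t) /\ is_derive f1 t (f2 t) /\ Rabs (f2 t) <= B) ->
  Rabs h <= d ->
  Rabs (f (x0 + h) - f x0 - h * f1 x0) <= B * h ^ 2.
Proof.
  intros H Hh.
  assert (Hin : forall t, Rmin x0 (x0 + h) <= t <= Rmax x0 (x0 + h) -> Rabs (t - x0) <= Rabs h).
  { intros t Ht. apply Rabs_le_between in Ht. now replace (x0 + h - x0) with h in Ht by ring. }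
  assert (Hf1 : forall t, Rmin x0 (x0 + h) <= t <= Rmax x0 (x0 + h) ->
            Rabs (f1 t - f1 x0) <= B * Rabs h).
  { intros t Ht. pose proof (Hin t Ht).
    assert (HB : 0 <= B).
    { destruct (H x0) as [_ [_ HB]].
      - rewrite Rminus_diag, Rabs_R0. pose proof (Rabs_pos h); lra.
      - pose proof (Rabs_pos (f2 x0)); lra. }
    apply Rle_trans with (B * Rabs (t - x0)); [|apply Rmult_le_compat_l; auto].
    apply (MVT_abs_le f1 f2); intros s Hs; apply Rabs_le_between in Hs; apply H; lra. }
  replace (f (x0 + h) - f x0 - h * f1 x0) with
    ((f (x0 + h) - f x0 - (x0 + h - x0) * f1 x0) - (f x0 - f x0 - (x0 - x0) * f1 x0))
    by ring.
  replace (B * h ^ 2) with (B * Rabs h * Rabs (x0 + h - x0)).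
  2:{ replace (x0 + h - x0) with h by ring.
      rewrite Rmult_assoc, <- Rabs_mult, Rabs_right; [ring | nra]. }
  apply (MVT_abs_le (fun t => f t - f x0 - (t - x0) * f1 x0) (fun t => f1 t - f1 x0));
    auto.
  intros t Ht.
  destruct (H t ltac:(pose proof (Hin t Ht); lra)) as [Df _].
  eapply is_derive_eq.
  - apply (is_derive_minus (K := R_AbsRing) (V := R_NormedModule));
      [apply (is_derive_minus (K := R_AbsRing) (V := R_NormedModule)); [exact Df|]|].
    + apply is_derive_const.
    + apply (is_derive_scal_l (K := R_AbsRing) (V := R_NormedModule) (fun t => t - x0)).
      apply (is_derive_minus (K := R_AbsRing) (V := R_NormedModule));
        [apply is_derive_id | apply is_derive_const].
  - unfold minus, plus, opp, one, zero, scal; simpl; unfold mult; simpl. ring.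
Qed.

Lemma is_derive_of_remainder_le (F : R -> R) x0 l d C : 0 < d ->
  (forall h, Rabs h <= d -> Rabs (F (x0 + h) - F x0 - h * l) <= C * h ^ 2) ->
  is_derive F x0 l.
Proof.
  intros Hd H. apply is_derive_Reals. intros eps Heps.
  assert (HC : 0 <= C).
  { specialize (H d). rewrite Rabs_right in H by lra. specialize (H (Rle_refl _)).
    pose proof (Rabs_pos (F (x0 + d) - F x0 - d * l)).
    assert (0 < d ^ 2) by nra. apply Rnot_lt_le. intros Hn. nra. }
  assert (Hd' : 0 < Rmin d (eps / (C + 1))).
  { apply Rmin_pos; auto. apply Rdiv_lt_0_compat; lra. }
  exists (mkposreal _ Hd'). intros h Hh0 Hh. simpl in Hh.
  pose proof (Rmin_l d (eps / (C + 1))); pose proof (Rmin_r d (eps / (C + 1))).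
  specialize (H h ltac:(lra)).
  assert (Hh1 : 0 < Rabs h) by (apply Rabs_pos_lt; auto).
  replace ((F (x0 + h) - F x0) / h - l) with ((F (x0 + h) - F x0 - h * l) / h)
    by (field; auto).
  unfold Rdiv. rewrite Rabs_mult, Rabs_inv.
  apply Rle_lt_trans with (C * Rabs h).
  - replace (C * Rabs h) with (C * h ^ 2 * / Rabs h).
    + apply Rmult_le_compat_r; auto. left; apply Rinv_0_lt_compat; auto.
    + rewrite <- (Rabs_right (h ^ 2)) by nra. rewrite <- RPow_abs. field. lra.
  - apply Rle_lt_trans with ((C + 1) * Rabs h); [nra|].
    replace eps with ((C + 1) * (eps / (C + 1))) by (field; lra).
    apply Rmult_lt_compat_l; lra.
Qed.

Lemma is_derive_integral_R (F : R -> R -> R) (F1 : R -> R) x0 J d C : 0 < d ->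
  (forall x, Rabs (x - x0) <= d -> exists l, is_RInt_line (F x) l) ->
  is_RInt_line F1 J ->
  (forall h u, Rabs h <= d ->
     Rabs (F (x0 + h) u - F x0 u - h * F1 u) <= C * h ^ 2 * inv_1_plus_sq u) ->
  is_derive (fun x => integral_R (F x)) x0 J.
Proof.
  intros Hd Hex HJ Hr.
  apply (is_derive_of_remainder_le _ x0 J d (C * PI)); auto.
  intros h Hh.
  destruct (Hex (x0 + h)) as [l1 H1]; [now replace (x0 + h - x0) with h by ring|].
  destruct (Hex x0) as [l0 H0]; [rewrite Rminus_diag, Rabs_R0; lra|].
  rewrite (integral_R_unique _ _ H1), (integral_R_unique _ _ H0).
  assert (Hrem : is_RInt_line (fun u => F (x0 + h) u - F x0 u - h * F1 u) (l1 - l0 - h * J))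
    by (apply is_RInt_line_minus; [apply is_RInt_line_minus | apply is_RInt_line_scal]; auto).
  assert (HB : is_RInt_line (fun u => C * h ^ 2 * inv_1_plus_sq u) (C * h ^ 2 * PI))
    by apply is_RInt_line_scal, is_RInt_line_inv_1_plus_sq.
  assert (HBn : is_RInt_line (fun u => -1 * (C * h ^ 2 * inv_1_plus_sq u))
                  (-1 * (C * h ^ 2 * PI))) by now apply is_RInt_line_scal.
  assert (U : l1 - l0 - h * J <= C * h ^ 2 * PI).
  { apply (is_RInt_line_le _ _ _ _ Hrem HB). intros u. specialize (Hr h u Hh).
    revert Hr. unfold Rabs; destruct Rcase_abs; lra. }
  assert (Lo : -1 * (C * h ^ 2 * PI) <= l1 - l0 - h * J).
  { apply (is_RInt_line_le _ _ _ _ HBn Hrem). intros u. specialize (Hr h u Hh).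
    revert Hr. unfold Rabs; destruct Rcase_abs; lra. }
  unfold Rabs; destruct Rcase_abs; lra.
Qed.

(** * The Gaussian integral and [erfcx] *)

Lemma exp_le_compat x y : x <= y -> exp x <= exp y.
Proof.
  intros H. destruct (Rle_lt_or_eq_dec x y H) as [Hlt | ->]; [|lra].
  left; apply exp_increasing, Hlt.
Qed.

Lemma exp_le_1 x : x <= 0 -> exp x <= 1.
Proof. intros H. rewrite <- exp_0. apply exp_le_compat, H. Qed.

Lemma exp_opp_mul_exp z : exp (- z) * exp z = 1.
Proof. rewrite <- exp_plus, Rplus_opp_l. apply exp_0. Qed.

Lemma exp_opp_mul_1_plus_le z : 0 <= z -> exp (- z) * (1 + z) <= 1.
Proof.
  intros Hz. pose proof (exp_ineq1_le z). pose proof (exp_opp_mul_exp z).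
  pose proof (exp_pos (- z)). nra.
Qed.

Lemma exp_opp_le_inv z : 0 <= z -> exp (- z) <= / (1 + z).
Proof.
  intros Hz. pose proof (exp_opp_mul_1_plus_le z Hz).
  apply (Rmult_le_reg_r (1 + z)); [lra|]. rewrite Rinv_l by lra. lra.
Qed.

Lemma mul_exp_opp_le z : 0 <= z -> z * exp (- z) <= 1.
Proof.
  intros Hz. pose proof (exp_ineq1_le z). pose proof (exp_opp_mul_exp z).
  pose proof (exp_pos (- z)). nra.
Qed.

Lemma sq_mul_exp_opp_le z : 0 <= z -> z ^ 2 * exp (- z) <= 4.
Proof.
  intros Hz. pose proof (exp_ineq1_le (z / 2)).
  assert (E : exp z = exp (z / 2) * exp (z / 2)) by (rewrite <- exp_plus; f_equal; field).
  pose proof (exp_opp_mul_exp z). pose proof (exp_pos (- z)).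
  assert (z ^ 2 <= 4 * exp z) by nra. nra.
Qed.

Definition gauss (t : R) := exp (- t ^ 2).

Lemma gauss_continuous t : continuous gauss t.
Proof. apply ex_derive_continuous_R. unfold gauss. auto_derive. auto. Qed.

Lemma gauss_pos t : 0 <= gauss t.
Proof. left; apply exp_pos. Qed.

Lemma gauss_le_1 t : gauss t <= 1.
Proof. apply exp_le_1. pose proof (pow2_ge_0 t). lra. Qed.

Definition gauss_integral := integral_R gauss.

Lemma is_RInt_line_gauss : is_RInt_line gauss gauss_integral.
Proof.
  destruct (ex_is_RInt_line_dominated gauss 1 gauss_continuous) as [l Hl].
  - intros t. rewrite Rabs_right, Rmult_1_l by (apply Rle_ge, gauss_pos).
    apply exp_opp_le_inv, pow2_ge_0.
  - unfold gauss_integral. now rewrite (integral_R_unique _ _ Hl).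
Qed.

Lemma gauss_integral_ge0 : 0 <= gauss_integral.
Proof. exact (is_RInt_line_ge0 _ _ gauss_pos is_RInt_line_gauss). Qed.

Lemma is_RInt_line_gauss_scaled a :
  0 < a -> is_RInt_line (fun u => exp (- (a ^ 2 * u ^ 2))) (gauss_integral / a).
Proof.
  intros Ha.
  replace (gauss_integral / a) with (/ a * gauss_integral) by (field; lra).
  apply (is_RInt_line_ext (fun u => / a * (a * gauss (a * u + 0)))).
  { intros u. unfold gauss. replace (- (a * u + 0) ^ 2) with (- (a ^ 2 * u ^ 2)) by ring.
    field. lra. }
  apply is_RInt_line_scal, is_RInt_line_comp_lin, Ha. apply is_RInt_line_gauss.
Qed.

Definition gauss_partial (a : R) := RInt gauss 0 a.

Lemma is_derive_gauss_partial a : is_derive gauss_partial a (gauss a).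
Proof.
  apply (is_derive_RInt (V := R_NormedModule) gauss gauss_partial 0 a).
  - exists (mkposreal 1 Rlt_0_1). intros y _.
    apply (RInt_correct (V := R_CompleteNormedModule)).
    apply ex_RInt_continuous_R, gauss_continuous.
  - apply gauss_continuous.
Qed.

Lemma gauss_partial_bounds a : 0 <= a -> 0 <= gauss_partial a <= a.
Proof.
  intros Ha. unfold gauss_partial. split.
  - apply RInt_ge_0; auto; [apply ex_RInt_continuous_R, gauss_continuous|].
    intros; apply gauss_pos.
  - apply Rle_trans with (RInt (fun _ => 1) 0 a); [|rewrite RInt_const_R; lra].
    apply RInt_le; auto.
    + apply ex_RInt_continuous_R, gauss_continuous.
    + apply ex_RInt_const.
    + intros; apply gauss_le_1.
Qed.

Lemma RInt_gauss_sym a : 2 * gauss_partial a = RInt gauss (- a) a.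
Proof.
  assert (Hg : forall a b, ex_RInt gauss a b)
    by (intros; apply ex_RInt_continuous_R, gauss_continuous).
  assert (C : RInt gauss (- a) a = RInt gauss (- a) 0 + RInt gauss 0 a)
    by (symmetry; apply (RInt_Chasles gauss); auto).
  assert (E : RInt gauss (- a) 0 = RInt gauss 0 a).
  { rewrite <- (RInt_ext_R (fun x => gauss (- x)) gauss)
      by (intros x; unfold gauss; now replace ((- x) ^ 2) with (x ^ 2) by ring).
    rewrite RInt_comp_opp_R, Ropp_0, Ropp_involutive by auto. reflexivity. }
  unfold gauss_partial. rewrite C, E. ring.
Qed.

(* Feynman's parametric integral; it equals [PI * erfc a]. *)
Definition feynman_integrand (a u : R) := exp (- (a ^ 2 * (1 + u ^ 2))) * inv_1_plus_sq u.

Definition feynman_integral (a : R) := integral_R (feynman_integrand a).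

Lemma feynman_integrand_continuous a u : continuous (feynman_integrand a) u.
Proof.
  apply ex_derive_continuous_R. unfold feynman_integrand, inv_1_plus_sq.
  auto_derive. nra.
Qed.

Lemma feynman_integrand_bounds a u :
  0 <= feynman_integrand a u <= inv_1_plus_sq u.
Proof.
  unfold feynman_integrand. pose proof (inv_1_plus_sq_pos u).
  pose proof (exp_pos (- (a ^ 2 * (1 + u ^ 2)))).
  assert (exp (- (a ^ 2 * (1 + u ^ 2))) <= 1).
  { apply exp_le_1. pose proof (pow2_ge_0 a); pose proof (pow2_ge_0 u). nra. }
  split; nra.
Qed.

Lemma is_RInt_line_feynman a : is_RInt_line (feynman_integrand a) (feynman_integral a).
Proof.
  destruct (ex_is_RInt_line_dominated (feynman_integrand a) 1) as [l Hl].
  - apply feynman_integrand_continuous.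
  - intros u. destruct (feynman_integrand_bounds a u).
    rewrite Rabs_right, Rmult_1_l; lra.
  - unfold feynman_integral. now rewrite (integral_R_unique _ _ Hl).
Qed.

Lemma feynman_integral_le a : feynman_integral a <= exp (- a ^ 2) * PI.
Proof.
  apply (is_RInt_line_le _ _ _ _ (is_RInt_line_feynman a)
           (is_RInt_line_scal _ _ (exp (- a ^ 2)) is_RInt_line_inv_1_plus_sq)).
  intros u. unfold feynman_integrand. apply Rmult_le_compat_r.
  - left; apply inv_1_plus_sq_pos.
  - apply exp_le_compat. pose proof (pow2_ge_0 a); pose proof (pow2_ge_0 u). nra.
Qed.

Lemma feynman_integral_ge a U : 0 < U -> 2 * atan U - 2 * U * a ^ 2 <= feynman_integral a.
Proof.
  intros HU.
  assert (Hq : forall a b, ex_RInt inv_1_plus_sq a b)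
    by (intros; apply ex_RInt_continuous_R, inv_1_plus_sq_continuous).
  apply Rle_trans with (RInt (fun u => inv_1_plus_sq u - a ^ 2) (- U) U).
  { rewrite RInt_minus_R, RInt_inv_1_plus_sq, RInt_const_R, atan_opp
      by (auto; apply ex_RInt_const). lra. }
  apply Rle_trans with (RInt (feynman_integrand a) (- U) U).
  2:{ apply (is_RInt_line_RInt_le _ _ (fun u => proj1 (feynman_integrand_bounds a u))
                                  (is_RInt_line_feynman a)). lra. }
  apply RInt_le; [lra| | |].
  - exact (ex_RInt_minus _ _ _ _ (Hq _ _) (ex_RInt_const _ _ _)).
  - apply ex_RInt_continuous_R, feynman_integrand_continuous.
  - intros u _. unfold feynman_integrand, inv_1_plus_sq.
    pose proof (exp_ineq1_le (- (a ^ 2 * (1 + u ^ 2)))).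
    assert (0 < 1 + u ^ 2) by nra.
    apply (Rmult_le_reg_r (1 + u ^ 2)); auto.
    rewrite Rmult_assoc, Rinv_l, Rmult_minus_distr_r, Rinv_l by lra. nra.
Qed.

Lemma is_derive_feynman_integrand u a :
  is_derive (fun a => feynman_integrand a u) a (-2 * a * exp (- (a ^ 2 * (1 + u ^ 2)))).
Proof.
  unfold feynman_integrand, inv_1_plus_sq. auto_derive; [nra|].
  replace (a * (a * 1) * (1 + u * (u * 1))) with (a ^ 2 * (1 + u ^ 2)) by ring.
  field. nra.
Qed.

Lemma is_derive_feynman_integrand' u a :
  is_derive (fun a => -2 * a * exp (- (a ^ 2 * (1 + u ^ 2)))) a
    ((-2 + 4 * (a ^ 2 * (1 + u ^ 2))) * exp (- (a ^ 2 * (1 + u ^ 2)))).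
Proof.
  auto_derive; [auto|].
  replace (a * (a * 1) * (1 + u * (u * 1))) with (a ^ 2 * (1 + u ^ 2)) by ring. ring.
Qed.

Lemma feynman_integrand''_bound a0 a u : 0 < a0 -> Rabs (a - a0) <= a0 / 2 ->
  Rabs ((-2 + 4 * (a ^ 2 * (1 + u ^ 2))) * exp (- (a ^ 2 * (1 + u ^ 2))))
    <= 72 / a0 ^ 2 * inv_1_plus_sq u.
Proof.
  intros Ha0 Ha. unfold inv_1_plus_sq.
  set (w := 1 + u ^ 2). set (z := a ^ 2 * w).
  assert (Hw : 1 <= w) by (unfold w; pose proof (pow2_ge_0 u); lra).
  assert (Haa : a0 / 2 <= a) by (revert Ha; unfold Rabs; destruct Rcase_abs; lra).
  assert (Hz : 0 <= z) by (unfold z; pose proof (pow2_ge_0 a); nra).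
  assert (Hwz : w * a0 ^ 2 <= 4 * z)
    by (unfold z; assert (a0 ^ 2 <= 4 * a ^ 2) by nra; nra).
  pose proof (mul_exp_opp_le z Hz); pose proof (sq_mul_exp_opp_le z Hz).
  pose proof (exp_pos (- z)).
  rewrite Rabs_mult, (Rabs_right (exp _)) by lra.
  assert (Rabs (-2 + 4 * z) <= 2 + 4 * z) by (unfold Rabs; destruct Rcase_abs; lra).
  assert (0 < a0 ^ 2) by nra.
  apply (Rmult_le_reg_r (w * a0 ^ 2)); [nra|].
  replace (72 / a0 ^ 2 * / w * (w * a0 ^ 2)) with 72 by (field; lra).
  apply Rle_trans with ((2 + 4 * z) * exp (- z) * (4 * z)).
  - pose proof (Rabs_pos (-2 + 4 * z)).
    apply Rmult_le_compat; try apply Rmult_le_compat_r; nra.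
  - replace ((2 + 4 * z) * exp (- z) * (4 * z))
      with (8 * (z * exp (- z)) + 16 * (z ^ 2 * exp (- z))) by ring. lra.
Qed.

Lemma is_derive_feynman_integral a0 :
  0 < a0 -> is_derive feynman_integral a0 (-2 * exp (- a0 ^ 2) * gauss_integral).
Proof.
  intros Ha0. unfold feynman_integral.
  apply (is_derive_integral_R feynman_integrand
           (fun u => -2 * a0 * exp (- (a0 ^ 2 * (1 + u ^ 2)))) a0 _ (a0 / 2) (72 / a0 ^ 2)).
  - lra.
  - intros x _. exists (feynman_integral x). apply is_RInt_line_feynman.
  - replace (-2 * exp (- a0 ^ 2) * gauss_integral)
      with (-2 * a0 * exp (- a0 ^ 2) * (gauss_integral / a0)) by (field; lra).
    apply (is_RInt_line_ext (fun u => -2 * a0 * exp (- a0 ^ 2) * exp (- (a0 ^ 2 * u ^ 2)))).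
    { intros u. rewrite Rmult_assoc, <- exp_plus. do 2 f_equal. ring. }
    apply is_RInt_line_scal, is_RInt_line_gauss_scaled, Ha0.
  - intros h u Hh.
    replace (72 / a0 ^ 2 * h ^ 2 * inv_1_plus_sq u)
      with (72 / a0 ^ 2 * inv_1_plus_sq u * h ^ 2) by ring.
    apply (taylor2_remainder_le (fun a => feynman_integrand a u)
             (fun a => -2 * a * exp (- (a ^ 2 * (1 + u ^ 2))))
             (fun a => (-2 + 4 * (a ^ 2 * (1 + u ^ 2))) * exp (- (a ^ 2 * (1 + u ^ 2))))
             a0 (a0 / 2)); auto.
    intros t Ht. split; [|split].
    + apply is_derive_feynman_integrand.
    + apply is_derive_feynman_integrand'.
    + apply feynman_integrand''_bound; auto.
Qed.

(* Its derivative vanishes: [-2 exp (- a^2) G] from [feynman_integral] cancels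
   [2 G exp (- a^2)] from [gauss_partial]. *)
Definition feynman_invariant (a : R) :=
  feynman_integral a + 2 * gauss_integral * gauss_partial a.

Lemma feynman_invariant_const a b : 0 < a -> 0 < b -> feynman_invariant b = feynman_invariant a.
Proof.
  intros Ha Hb. apply Rminus_diag_uniq, Rabs_eq_0, Rle_antisym; [|apply Rabs_pos].
  rewrite <- (Rmult_0_l (Rabs (b - a))).
  apply (MVT_abs_le feynman_invariant (fun _ => 0)).
  - intros t Ht. assert (0 < t) by (revert Ht; unfold Rmin; destruct Rle_dec; lra).
    unfold feynman_invariant. eapply is_derive_eq.
    + apply (is_derive_plus (K := R_AbsRing) (V := R_NormedModule));
        [apply is_derive_feynman_integral; auto|].
      apply is_derive_scal, is_derive_gauss_partial.
    + unfold plus, scal, gauss; simpl; unfold mult; simpl. ring.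
  - intros. rewrite Rabs_R0. lra.
Qed.

Lemma feynman_invariant_near_0 eps :
  0 < eps -> exists b, 0 < b /\ Rabs (feynman_invariant b - PI) <= eps.
Proof.
  intros Heps. pose proof gauss_integral_ge0 as HG.
  set (U := 4 / eps). assert (HU : 0 < U) by (apply Rdiv_lt_0_compat; lra).
  set (c := eps / (4 * (U + gauss_integral + 1))).
  assert (Hc : 0 < c) by (apply Rdiv_lt_0_compat; lra).
  assert (Hc4 : 4 * (U + gauss_integral + 1) * c = eps) by (unfold c; field; lra).
  set (b := Rmin 1 c). exists b.
  assert (Hb1 : b <= 1) by apply Rmin_l. assert (Hbc : b <= c) by apply Rmin_r.
  assert (Hb : 0 < b) by (apply Rmin_pos; lra).
  split; auto.
  pose proof PI_RGT_0.
  assert (feynman_integral b <= PI).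
  { apply Rle_trans with (exp (- b ^ 2) * PI); [apply feynman_integral_le|].
    pose proof (exp_le_1 (- b ^ 2) ltac:(nra)). nra. }
  pose proof (feynman_integral_ge b U HU). pose proof (atan_ge_PI2_minus_inv U HU).
  assert (/ U = eps / 4) by (unfold U; field; lra).
  destruct (gauss_partial_bounds b ltac:(lra)).
  assert (gauss_integral * gauss_partial b <= gauss_integral * c)
    by (apply Rmult_le_compat_l; lra).
  assert (U * b ^ 2 <= U * c) by (apply Rmult_le_compat_l; nra).
  assert (0 <= gauss_integral * gauss_partial b) by (apply Rmult_le_pos; lra).
  assert (0 <= gauss_integral * c /\ 0 <= U * c) as [] by (split; nra).
  unfold feynman_invariant. unfold Rabs; destruct Rcase_abs; lra.
Qed.

Lemma feynman_invariant_PI a : 0 < a -> feynman_invariant a = PI.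
Proof.
  intros Ha. apply Req_le_aux. intros [eps Heps]; simpl.
  destruct (feynman_invariant_near_0 eps Heps) as [b [Hb Hb']].
  now rewrite (feynman_invariant_const b a).
Qed.

Lemma feynman_integral_le_inv a : feynman_integral a <= PI / (1 + a ^ 2).
Proof.
  pose proof PI_RGT_0. apply Rle_trans with (exp (- a ^ 2) * PI).
  - apply feynman_integral_le.
  - unfold Rdiv. rewrite Rmult_comm. apply Rmult_le_compat_l; [lra|].
    apply exp_opp_le_inv, pow2_ge_0.
Qed.

(* As [a -> +oo], the invariant tends to [G * G]. *)
Lemma gauss_integral_sq : gauss_integral ^ 2 = PI.
Proof.
  pose proof gauss_integral_ge0 as HG. pose proof PI_RGT_0.
  apply Req_le_aux. intros [eps Heps]; simpl.
  destruct is_RInt_line_gauss as [_ C].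
  destruct (C (eps / (2 * (gauss_integral + 1)))) as [M HM];
    [apply Rdiv_lt_0_compat; lra|].
  assert (Heps' : 0 < 2 * PI / eps) by (apply Rdiv_lt_0_compat; lra).
  set (a := Rabs M + 1 + 2 * PI / eps).
  pose proof (Rle_abs M); pose proof (Rle_abs (- M)); rewrite Rabs_Ropp in *.
  pose proof (Rabs_pos M).
  assert (Ha : 1 <= a) by (unfold a; lra).
  specialize (HM (- a) a ltac:(unfold a; lra) ltac:(unfold a; lra)).
  rewrite <- RInt_gauss_sym in HM.
  assert (HE : gauss_integral * Rabs (2 * gauss_partial a - gauss_integral) <= eps / 2).
  { apply Rle_trans with ((gauss_integral + 1) * (eps / (2 * (gauss_integral + 1)))).
    - apply Rmult_le_compat; try apply Rabs_pos; lra.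
    - right; field; lra. }
  assert (HL : feynman_integral a <= eps / 2).
  { apply Rle_trans with (PI / a).
    - apply Rle_trans with (PI / (1 + a ^ 2)); [apply feynman_integral_le_inv|].
      apply Rmult_le_compat_l; [lra|]. apply Rinv_le_contravar; nra.
    - assert (2 * PI / eps <= a) by (unfold a; lra).
      apply (Rmult_le_reg_r (2 * a / eps)); [apply Rdiv_lt_0_compat; lra|].
      replace (PI / a * (2 * a / eps)) with (2 * PI / eps) by (field; lra).
      replace (eps / 2 * (2 * a / eps)) with a by (field; lra). lra. }
  pose proof (is_RInt_line_ge0 _ _ (fun u => proj1 (feynman_integrand_bounds a u))
                (is_RInt_line_feynman a)).
  pose proof (feynman_invariant_PI a ltac:(lra)) as P. unfold feynman_invariant in P.
  replace (gauss_integral ^ 2 - PI)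
    with (- (gauss_integral * (2 * gauss_partial a - gauss_integral)) - feynman_integral a)
    by (rewrite <- P; ring).
  revert HE. rewrite <- (Rabs_right gauss_integral) at 1 by lra. rewrite <- Rabs_mult.
  unfold Rabs; repeat destruct Rcase_abs; lra.
Qed.

Lemma gauss_integral_sqrt_PI : gauss_integral = sqrt PI.
Proof. rewrite <- gauss_integral_sq, sqrt_pow2; auto using gauss_integral_ge0. Qed.

Lemma feynman_integral_erfc a :
  0 < a -> feynman_integral a = PI - 2 * sqrt PI * gauss_partial a.
Proof.
  intros Ha. pose proof (feynman_invariant_PI a ltac:(lra)) as P.
  unfold feynman_invariant in P. rewrite gauss_integral_sqrt_PI in P. lra.
Qed.

Lemma erfcx_feynman y : 0 < y -> erfcx y = exp (y ^ 2) * feynman_integral y / PI.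
Proof.
  intros Hy. pose proof PI_RGT_0.
  unfold erfcx. change (RInt (fun t => exp (- t ^ 2)) 0 y) with (gauss_partial y).
  rewrite feynman_integral_erfc by auto.
  pose proof (sqrt_sqrt PI ltac:(lra)). pose proof (sqrt_lt_R0 PI ltac:(lra)).
  set (sp := sqrt PI) in *. rewrite <- H0. field. lra.
Qed.

Lemma feynman_integral_pos y : 0 < feynman_integral y.
Proof.
  set (c := exp (- (y ^ 2 * 2)) / 2).
  assert (Hc : 0 < c) by (unfold c; pose proof (exp_pos (- (y ^ 2 * 2))); lra).
  apply Rlt_le_trans with (RInt (fun _ => c) (-1) 1); [rewrite RInt_const_R; lra|].
  apply Rle_trans with (RInt (feynman_integrand y) (-1) 1).
  2:{ apply (is_RInt_line_RInt_le _ _ (fun u => proj1 (feynman_integrand_bounds y u))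
                                  (is_RInt_line_feynman y)). lra. }
  apply RInt_le; [lra | apply ex_RInt_const | |].
  - apply ex_RInt_continuous_R, feynman_integrand_continuous.
  - intros u Hu. unfold c, feynman_integrand, inv_1_plus_sq.
    assert (u ^ 2 <= 1) by nra. pose proof (pow2_ge_0 y).
    assert (exp (- (y ^ 2 * 2)) <= exp (- (y ^ 2 * (1 + u ^ 2)))) by (apply exp_le_compat; nra).
    assert (/ 2 <= / (1 + u ^ 2)) by (apply Rinv_le_contravar; nra).
    unfold Rdiv. apply Rmult_le_compat; auto; left; [apply exp_pos | lra].
Qed.

Lemma erfcx_pos y : 0 < y -> 0 < erfcx y.
Proof.
  intros Hy. rewrite erfcx_feynman by auto. pose proof PI_RGT_0.
  pose proof (exp_pos (y ^ 2)). pose proof (feynman_integral_pos y).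
  apply Rdiv_lt_0_compat; [apply Rmult_lt_0_compat|]; lra.
Qed.

(** * Gaussian integrals against [1 / (a^2 + w^2)] *)

Lemma sqr_div_sqrt2 a : (a / sqrt 2) ^ 2 = a ^ 2 / 2.
Proof.
  assert (H2 : 0 < sqrt 2) by (apply sqrt_lt_R0; lra).
  replace ((a / sqrt 2) ^ 2) with (a ^ 2 / (sqrt 2 * sqrt 2)) by (field; lra).
  rewrite sqrt_sqrt by lra. reflexivity.
Qed.

Lemma is_RInt_line_gauss_half : is_RInt_line (fun w => exp (- w ^ 2 / 2)) (sqrt (2 * PI)).
Proof.
  assert (H2 : 0 < sqrt 2) by (apply sqrt_lt_R0; lra).
  rewrite sqrt_mult, <- gauss_integral_sqrt_PI by (pose proof PI_RGT_0; lra).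
  apply (is_RInt_line_ext (fun w => sqrt 2 * (/ sqrt 2 * gauss (/ sqrt 2 * w + 0)))).
  { intros w. unfold gauss. rewrite <- Rmult_assoc, Rinv_r, Rmult_1_l by lra.
    replace (/ sqrt 2 * w + 0) with (w / sqrt 2) by (field; lra).
    rewrite sqr_div_sqrt2. f_equal. field. }
  apply is_RInt_line_scal, is_RInt_line_comp_lin; [apply is_RInt_line_gauss|].
  apply Rinv_0_lt_compat, H2.
Qed.

(* The substitution [u = w / a] turns this integral into [feynman_integral (a / sqrt 2)]. *)
Lemma is_RInt_line_gauss_cauchy a : 0 < a ->
  is_RInt_line (fun w => exp (- w ^ 2 / 2) / (a ^ 2 + w ^ 2)) (PI * erfcx (a / sqrt 2) / a).
Proof.
  intros Ha. set (y := a / sqrt 2).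
  assert (Hy2 : y ^ 2 = a ^ 2 / 2) by apply sqr_div_sqrt2.
  assert (Hy : 0 < y) by (apply Rdiv_lt_0_compat; [|apply sqrt_lt_R0]; lra).
  pose proof PI_RGT_0. pose proof (exp_pos (y ^ 2)).
  replace (PI * erfcx y / a) with (exp (y ^ 2) / a * feynman_integral y)
    by (rewrite erfcx_feynman by auto; field; lra).
  apply (is_RInt_line_ext (fun w => exp (y ^ 2) / a * (/ a * feynman_integrand y (/ a * w + 0)))).
  { intros w. unfold feynman_integrand, inv_1_plus_sq.
    replace (- (y ^ 2 * (1 + (/ a * w + 0) ^ 2))) with (- y ^ 2 + - w ^ 2 / 2)
      by (rewrite Hy2; field; lra).
    rewrite exp_plus, exp_Ropp.
    assert (0 < a ^ 2 + w ^ 2) by (pose proof (pow2_ge_0 w); nra).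
    replace (1 + (/ a * w + 0) ^ 2) with ((a ^ 2 + w ^ 2) / a ^ 2) by (field; lra).
    field. lra. }
  apply is_RInt_line_scal, is_RInt_line_comp_lin; [apply is_RInt_line_feynman|].
  apply Rinv_0_lt_compat, Ha.
Qed.

Lemma is_derive_gauss_cauchy_primitive a w : 0 < a ->
  is_derive (fun w => w * exp (- w ^ 2 / 2) / (a ^ 2 + w ^ 2)) w
    (((1 + a ^ 2) / (a ^ 2 + w ^ 2) - 1) * exp (- w ^ 2 / 2)
     - 2 * (w ^ 2 * exp (- w ^ 2 / 2) / (a ^ 2 + w ^ 2) ^ 2)).
Proof.
  intros Ha. assert (0 < a ^ 2 + w ^ 2) by (pose proof (pow2_ge_0 w); nra).
  auto_derive; [lra|].
  replace (- (w * (w * 1)) * / 2) with (- w ^ 2 / 2) by field.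
  field. lra.
Qed.

Lemma gauss_cauchy_primitive_vanishing a : 0 < a -> forall eps, 0 < eps ->
  exists M, forall w, M <= Rabs w -> Rabs (w * exp (- w ^ 2 / 2) / (a ^ 2 + w ^ 2)) <= eps.
Proof.
  intros Ha eps Heps. exists (/ eps + 1). intros w Hw.
  assert (Hie : 0 < / eps) by (apply Rinv_0_lt_compat; auto).
  assert (Hw0 : 0 < Rabs w) by lra.
  assert (Hq : 0 < a ^ 2 + w ^ 2) by (pose proof (pow2_ge_0 w); nra).
  pose proof (exp_pos (- w ^ 2 / 2)).
  pose proof (exp_le_1 (- w ^ 2 / 2) ltac:(pose proof (pow2_ge_0 w); lra)).
  assert (Hfrac : w ^ 2 / (a ^ 2 + w ^ 2) <= 1).
  { apply (Rmult_le_reg_r (a ^ 2 + w ^ 2)); auto. field_simplify; nra. }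
  assert (Hprod : Rabs (w * exp (- w ^ 2 / 2) / (a ^ 2 + w ^ 2)) * Rabs w <= 1).
  { rewrite <- Rabs_mult.
    replace (w * exp (- w ^ 2 / 2) / (a ^ 2 + w ^ 2) * w)
      with (w ^ 2 / (a ^ 2 + w ^ 2) * exp (- w ^ 2 / 2)) by (field; lra).
    assert (0 <= w ^ 2 / (a ^ 2 + w ^ 2))
      by (apply Rdiv_le_0_compat; [apply pow2_ge_0 | lra]).
    rewrite Rabs_right by (apply Rle_ge, Rmult_le_pos; lra). nra. }
  assert (/ Rabs w <= eps)
    by (rewrite <- (Rinv_inv eps); apply Rinv_le_contravar; lra).
  apply Rle_trans with (/ Rabs w); auto.
  apply (Rmult_le_reg_r (Rabs w)); auto. rewrite Rinv_l; lra.
Qed.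

Lemma is_RInt_line_gauss_cauchy_sq a : 0 < a ->
  is_RInt_line (fun w => w ^ 2 * exp (- w ^ 2 / 2) / (a ^ 2 + w ^ 2) ^ 2)
    (((1 + a ^ 2) * (PI * erfcx (a / sqrt 2) / a) - sqrt (2 * PI)) / 2).
Proof.
  intros Ha.
  assert (Hparts : is_RInt_line (fun w =>
            ((1 + a ^ 2) / (a ^ 2 + w ^ 2) - 1) * exp (- w ^ 2 / 2)
            - 2 * (w ^ 2 * exp (- w ^ 2 / 2) / (a ^ 2 + w ^ 2) ^ 2)) 0).
  { apply (is_RInt_line_derive_vanishing (fun w => w * exp (- w ^ 2 / 2) / (a ^ 2 + w ^ 2))).
    - intros w. apply is_derive_gauss_cauchy_primitive, Ha.
    - intros w. apply ex_derive_continuous_R.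
      assert (0 < a ^ 2 + w ^ 2) by (pose proof (pow2_ge_0 w); nra).
      auto_derive. repeat split; apply Rgt_not_eq; nra.
    - apply gauss_cauchy_primitive_vanishing, Ha. }
  pose proof (is_RInt_line_minus _ _ _ _
    (is_RInt_line_minus _ _ _ _
      (is_RInt_line_scal _ _ (1 + a ^ 2) (is_RInt_line_gauss_cauchy a Ha))
      is_RInt_line_gauss_half) Hparts) as H.
  replace (((1 + a ^ 2) * (PI * erfcx (a / sqrt 2) / a) - sqrt (2 * PI)) / 2)
    with (/ 2 * ((1 + a ^ 2) * (PI * erfcx (a / sqrt 2) / a) - sqrt (2 * PI) - 0))
    by (field; lra).
  eapply is_RInt_line_ext; [|exact (is_RInt_line_scal _ _ (/ 2) H)].
  intros w. simpl. field. pose proof (pow2_ge_0 w). nra.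
Qed.

(** * Smoothing by the Cauchy kernel *)

Lemma Rabs_div_le num den K : 0 < den -> Rabs num <= K * den -> Rabs (num / den) <= K.
Proof.
  intros Hd H. unfold Rdiv. rewrite Rabs_mult, Rabs_inv, (Rabs_right den) by lra.
  apply (Rmult_le_reg_r den); auto. rewrite Rmult_assoc, Rinv_l by lra. lra.
Qed.

Definition cauchy_kernel se t := se / (PI * (se ^ 2 + t ^ 2)).
Definition cauchy_kernel' se t := -2 * se * t / (PI * (se ^ 2 + t ^ 2) ^ 2).
Definition cauchy_kernel'' se t := se * (6 * t ^ 2 - 2 * se ^ 2) / (PI * (se ^ 2 + t ^ 2) ^ 3).

Section CauchyKernel.

Variable se : R.
Hypothesis hse : 0 < se.

Lemma cauchy_pdf_kernel t : cauchy_pdf 0 se t = cauchy_kernel se t.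
Proof.
  unfold cauchy_pdf, cauchy_kernel. pose proof PI_RGT_0.
  assert (0 < se ^ 2 + t ^ 2) by nra.
  replace (1 + ((t - 0) / se) ^ 2) with ((se ^ 2 + t ^ 2) / se ^ 2) by (field; lra).
  field. lra.
Qed.

Lemma cauchy_kernel_bound t : Rabs (cauchy_kernel se t) <= / (PI * se).
Proof.
  pose proof PI_RGT_0. unfold cauchy_kernel.
  apply Rabs_div_le; [apply Rmult_lt_0_compat; nra|].
  rewrite Rabs_right by lra.
  replace (/ (PI * se) * (PI * (se ^ 2 + t ^ 2))) with (se + t ^ 2 / se) by (field; lra).
  assert (0 <= t ^ 2 / se) by (apply Rdiv_le_0_compat; [apply pow2_ge_0 | lra]). lra.
Qed.

Lemma cauchy_kernel'_bound t : Rabs (cauchy_kernel' se t) <= / (PI * se ^ 2).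
Proof.
  pose proof PI_RGT_0. unfold cauchy_kernel'.
  set (Q := se ^ 2 + t ^ 2).
  assert (HQ : se ^ 2 <= Q) by (unfold Q; nra).
  assert (HQ2 : 2 * se * Rabs t <= Q).
  { unfold Q. pose proof (pow2_ge_0 (se - t)); pose proof (pow2_ge_0 (se + t)).
    unfold Rabs; destruct Rcase_abs; nra. }
  apply Rabs_div_le; [apply Rmult_lt_0_compat; [lra | apply pow_lt; nra]|].
  replace (/ (PI * se ^ 2) * (PI * Q ^ 2)) with (Q ^ 2 / se ^ 2) by (field; lra).
  replace (Rabs (-2 * se * t)) with (2 * se * Rabs t)
    by (unfold Rabs; repeat destruct Rcase_abs; nra).
  apply (Rmult_le_reg_r (se ^ 2)); [nra|].
  replace (Q ^ 2 / se ^ 2 * se ^ 2) with (Q * Q) by (field; lra).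
  pose proof (Rabs_pos t). apply Rmult_le_compat; nra.
Qed.

Lemma cauchy_kernel''_bound t : Rabs (cauchy_kernel'' se t) <= 6 / (PI * se ^ 3).
Proof.
  pose proof PI_RGT_0. unfold cauchy_kernel''.
  set (Q := se ^ 2 + t ^ 2).
  assert (HQ : se ^ 2 <= Q) by (unfold Q; nra).
  assert (HQ0 : 0 < Q) by nra.
  assert (H6 : Rabs (6 * t ^ 2 - 2 * se ^ 2) <= 6 * Q).
  { unfold Q. pose proof (pow2_ge_0 t). unfold Rabs; destruct Rcase_abs; nra. }
  apply Rabs_div_le; [apply Rmult_lt_0_compat; [lra | apply pow_lt; lra]|].
  replace (6 / (PI * se ^ 3) * (PI * Q ^ 3)) with (6 * Q ^ 3 / se ^ 3) by (field; lra).
  rewrite Rabs_mult, (Rabs_right se) by lra.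
  apply (Rmult_le_reg_r (se ^ 3)); [apply pow_lt; lra|].
  replace (6 * Q ^ 3 / se ^ 3 * se ^ 3) with (6 * Q * (Q * Q)) by (field; lra).
  replace (se * Rabs (6 * t ^ 2 - 2 * se ^ 2) * se ^ 3)
    with (Rabs (6 * t ^ 2 - 2 * se ^ 2) * (se ^ 2 * se ^ 2)) by ring.
  apply Rmult_le_compat; try apply Rabs_pos; try nra.
Qed.

Lemma is_derive_cauchy_kernel t : is_derive (cauchy_kernel se) t (cauchy_kernel' se t).
Proof.
  pose proof PI_RGT_0. assert (0 < se ^ 2 + t ^ 2) by nra.
  unfold cauchy_kernel, cauchy_kernel'. auto_derive.
  - apply Rgt_not_eq. nra.
  - field. nra.
Qed.

Lemma is_derive_cauchy_kernel' t : is_derive (cauchy_kernel' se) t (cauchy_kernel'' se t).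
Proof.
  pose proof PI_RGT_0. assert (0 < se ^ 2 + t ^ 2) by nra.
  assert (0 < PI * (se ^ 2 + t ^ 2) ^ 2) by (apply Rmult_lt_0_compat; [|apply pow_lt]; lra).
  unfold cauchy_kernel', cauchy_kernel''. auto_derive.
  - apply Rgt_not_eq. lra.
  - field. nra.
Qed.

Lemma continuous_cauchy_kernel t : continuous (cauchy_kernel se) t.
Proof. apply ex_derive_continuous_R. eexists. apply is_derive_cauchy_kernel. Qed.

Lemma continuous_cauchy_kernel' t : continuous (cauchy_kernel' se) t.
Proof. apply ex_derive_continuous_R. eexists. apply is_derive_cauchy_kernel'. Qed.

End CauchyKernel.

Section CauchySmoothing.

Variables (s0 th0 se : R).
Hypothesis hse : 0 < se.

Definition smoothed (k g : R -> R) (x : R) :=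
  integral_R (fun u => g u * k (x - (s0 * u + th0))).

Lemma continuous_comp_shift (k : R -> R) x u :
  (forall t, continuous k t) -> continuous (fun u => k (x - (s0 * u + th0))) u.
Proof.
  intros Hk. apply (continuous_comp (fun u => x - (s0 * u + th0)) k); [|apply Hk].
  apply ex_derive_continuous_R. auto_derive. auto.
Qed.

Lemma ex_is_RInt_line_shift (g k : R -> R) C B x :
  (forall u, continuous g u) -> (forall u, Rabs (g u) <= C * inv_1_plus_sq u) ->
  (forall t, continuous k t) -> (forall t, Rabs (k t) <= B) ->
  exists l, is_RInt_line (fun u => g u * k (x - (s0 * u + th0))) l.
Proof.
  intros Hgc Hg Hkc Hk. apply (ex_is_RInt_line_mul_bounded _ _ C B); auto.
  intros u. apply continuous_comp_shift, Hkc.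
Qed.

Lemma is_derive_smoothed (g : R -> R) C x0 :
  (forall u, continuous g u) -> (forall u, Rabs (g u) <= C * inv_1_plus_sq u) ->
  is_derive (smoothed (cauchy_kernel se) g) x0 (smoothed (cauchy_kernel' se) g x0).
Proof.
  intros Hgc Hg.
  destruct (ex_is_RInt_line_shift g (cauchy_kernel' se) C (/ (PI * se ^ 2)) x0)
    as [J HJ]; auto using continuous_cauchy_kernel', cauchy_kernel'_bound.
  unfold smoothed at 2. rewrite (integral_R_unique _ _ HJ).
  apply (is_derive_integral_R (fun x u => g u * cauchy_kernel se (x - (s0 * u + th0)))
           (fun u => g u * cauchy_kernel' se (x0 - (s0 * u + th0))) x0 J 1
           (C * (6 / (PI * se ^ 3)))); auto; [lra| |].
  - intros x _. apply (ex_is_RInt_line_shift _ _ C (/ (PI * se))); auto.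
    + apply continuous_cauchy_kernel, hse.
    + apply cauchy_kernel_bound, hse.
  - intros h u Hh. cbv beta.
    set (v := s0 * u + th0).
    replace (g u * cauchy_kernel se (x0 + h - v) - g u * cauchy_kernel se (x0 - v)
             - h * (g u * cauchy_kernel' se (x0 - v)))
      with (g u * (cauchy_kernel se (x0 + h - v) - cauchy_kernel se (x0 - v)
                   - h * cauchy_kernel' se (x0 - v))) by ring.
    rewrite Rabs_mult.
    replace (C * (6 / (PI * se ^ 3)) * h ^ 2 * inv_1_plus_sq u)
      with (C * inv_1_plus_sq u * (6 / (PI * se ^ 3) * h ^ 2)) by ring.
    apply Rmult_le_compat; auto using Rabs_pos.
    apply (taylor2_remainder_le (fun x => cauchy_kernel se (x - v))
             (fun x => cauchy_kernel' se (x - v)) (fun x => cauchy_kernel'' se (x - v))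
             x0 1); auto.
    intros t _. split; [|split].
    + apply is_derive_comp_sub, is_derive_cauchy_kernel, hse.
    + apply is_derive_comp_sub, is_derive_cauchy_kernel', hse.
    + apply cauchy_kernel''_bound, hse.
Qed.

End CauchySmoothing.

(** * The posterior mean near the prior mean *)

Definition std_normal (w : R) := / sqrt (2 * PI) * exp (- w ^ 2 / 2).

Lemma sqrt_2PI_pos : 0 < sqrt (2 * PI).
Proof. apply sqrt_lt_R0. pose proof PI_RGT_0. lra. Qed.

Lemma normal_pdf_affine th0 s0 w :
  0 < s0 -> s0 * normal_pdf th0 s0 (s0 * w + th0) = std_normal w.
Proof.
  intros Hs. unfold normal_pdf, std_normal. pose proof sqrt_2PI_pos.
  replace (- (s0 * w + th0 - th0) ^ 2 / (2 * s0 ^ 2)) with (- w ^ 2 / 2) by (field; lra).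
  field. lra.
Qed.

Lemma poly_mul_exp_half_le w : (1 + w ^ 2) ^ 2 * exp (- w ^ 2 / 2) <= 21.
Proof.
  set (z := w ^ 2 / 2). assert (Hz : 0 <= z) by (unfold z; pose proof (pow2_ge_0 w); lra).
  replace (- w ^ 2 / 2) with (- z) by (unfold z; field).
  replace ((1 + w ^ 2) ^ 2 * exp (- z))
    with (exp (- z) + 4 * (z * exp (- z)) + 4 * (z ^ 2 * exp (- z))) by (unfold z; field).
  pose proof (mul_exp_opp_le z Hz); pose proof (sq_mul_exp_opp_le z Hz).
  pose proof (exp_le_1 (- z) ltac:(lra)). lra.
Qed.

Lemma affine_std_normal_bound c1 c0 w :
  Rabs ((c1 * w + c0) * std_normal w)
    <= 21 * (Rabs c1 + Rabs c0) / sqrt (2 * PI) * inv_1_plus_sq w.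
Proof.
  pose proof sqrt_2PI_pos. pose proof (exp_pos (- w ^ 2 / 2)).
  pose proof (poly_mul_exp_half_le w). pose proof (pow2_ge_0 w).
  assert (A : Rabs (c1 * w + c0) <= (Rabs c1 + Rabs c0) * (1 + w ^ 2)).
  { eapply Rle_trans; [apply Rabs_triang|]. rewrite Rabs_mult.
    assert (Rabs w <= 1 + w ^ 2) by (unfold Rabs; destruct Rcase_abs; nra).
    pose proof (Rabs_pos c1); pose proof (Rabs_pos c0). nra. }
  unfold std_normal, inv_1_plus_sq.
  rewrite Rabs_mult, (Rabs_right (/ _ * _))
    by (apply Rle_ge, Rmult_le_pos; [left; apply Rinv_0_lt_compat|]; lra).
  apply (Rmult_le_reg_r (1 + w ^ 2)); [lra|].
  replace (21 * (Rabs c1 + Rabs c0) / sqrt (2 * PI) * / (1 + w ^ 2) * (1 + w ^ 2))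
    with ((Rabs c1 + Rabs c0) / sqrt (2 * PI) * 21) by (field; lra).
  apply Rle_trans with ((Rabs c1 + Rabs c0) / sqrt (2 * PI)
                        * ((1 + w ^ 2) ^ 2 * exp (- w ^ 2 / 2))).
  - replace ((Rabs c1 + Rabs c0) / sqrt (2 * PI) * ((1 + w ^ 2) ^ 2 * exp (- w ^ 2 / 2)))
      with ((Rabs c1 + Rabs c0) * (1 + w ^ 2) * (/ sqrt (2 * PI) * exp (- w ^ 2 / 2))
            * (1 + w ^ 2)) by (field; lra).
    apply Rmult_le_compat_r; [lra|]. apply Rmult_le_compat_r; auto.
    apply Rmult_le_pos; [left; apply Rinv_0_lt_compat|]; lra.
  - apply Rmult_le_compat_l; auto.
    apply Rdiv_le_0_compat; [pose proof (Rabs_pos c1); pose proof (Rabs_pos c0)|]; lra.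
Qed.

Lemma std_normal_bound w : Rabs (std_normal w) <= 21 / sqrt (2 * PI) * inv_1_plus_sq w.
Proof.
  replace (std_normal w) with ((0 * w + 1) * std_normal w) by ring.
  replace (21 / sqrt (2 * PI)) with (21 * (Rabs 0 + Rabs 1) / sqrt (2 * PI))
    by (rewrite Rabs_R0, Rabs_R1; field; apply Rgt_not_eq, sqrt_2PI_pos).
  apply affine_std_normal_bound.
Qed.

Lemma continuous_affine_std_normal c1 c0 w :
  continuous (fun w => (c1 * w + c0) * std_normal w) w.
Proof. apply ex_derive_continuous_R. unfold std_normal. auto_derive. auto. Qed.

Lemma continuous_std_normal w : continuous std_normal w.
Proof. apply ex_derive_continuous_R. unfold std_normal. auto_derive. auto. Qed.

Lemma posterior_mean_smoothed th0 s0 se x : 0 < s0 -> 0 < se ->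
  posterior_mean th0 s0 se x =
  smoothed s0 th0 (cauchy_kernel se) (fun w => (s0 * w + th0) * std_normal w) x
  / smoothed s0 th0 (cauchy_kernel se) std_normal x.
Proof.
  intros Hs Hse. unfold posterior_mean, smoothed.
  destruct (ex_is_RInt_line_shift s0 th0 (fun w => (s0 * w + th0) * std_normal w)
              (cauchy_kernel se) (21 * (Rabs s0 + Rabs th0) / sqrt (2 * PI)) (/ (PI * se)) x)
    as [lN HN]; auto using continuous_affine_std_normal, affine_std_normal_bound,
                          continuous_cauchy_kernel, cauchy_kernel_bound.
  destruct (ex_is_RInt_line_shift s0 th0 std_normal
              (cauchy_kernel se) (21 / sqrt (2 * PI)) (/ (PI * se)) x)
    as [lD HD]; auto using continuous_std_normal, std_normal_bound,
                          continuous_cauchy_kernel, cauchy_kernel_bound.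
  rewrite (integral_R_unique _ _ HN), (integral_R_unique _ _ HD).
  f_equal; apply integral_R_unique, (is_RInt_line_comp_lin_inv _ _ s0 th0 Hs).
  - revert HN. apply is_RInt_line_ext. intros w.
    rewrite cauchy_pdf_kernel, <- (normal_pdf_affine th0 s0 w Hs) by auto. ring.
  - revert HD. apply is_RInt_line_ext. intros w.
    rewrite cauchy_pdf_kernel, <- (normal_pdf_affine th0 s0 w Hs) by auto. ring.
Qed.

Section PosteriorAtPriorMean.

Variables (s0 se th0 : R).
Hypotheses (hs0 : 0 < s0) (hse : 0 < se).

Lemma cauchy_kernel_at_prior_mean w :
  cauchy_kernel se (th0 - (s0 * w + th0)) = se / (PI * s0 ^ 2) / ((se / s0) ^ 2 + w ^ 2).
Proof.
  pose proof PI_RGT_0. unfold cauchy_kernel. field. repeat split; nra.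
Qed.

Lemma cauchy_kernel'_at_prior_mean w :
  cauchy_kernel' se (th0 - (s0 * w + th0))
  = 2 * se / (PI * s0 ^ 3) * (w / ((se / s0) ^ 2 + w ^ 2) ^ 2).
Proof.
  pose proof PI_RGT_0. unfold cauchy_kernel'. field. repeat split; nra.
Qed.

Lemma is_RInt_line_odd_shift (g k : R -> R) C B :
  (forall u, continuous g u) -> (forall u, Rabs (g u) <= C * inv_1_plus_sq u) ->
  (forall t, continuous k t) -> (forall t, Rabs (k t) <= B) ->
  (forall w, g (- w) * k (th0 - (s0 * - w + th0)) = - (g w * k (th0 - (s0 * w + th0)))) ->
  is_RInt_line (fun w => g w * k (th0 - (s0 * w + th0))) 0.
Proof.
  intros Hgc Hg Hkc Hk Hodd.
  destruct (ex_is_RInt_line_shift s0 th0 g k C B th0) as [l Hl]; auto.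
  now rewrite <- (is_RInt_line_odd _ _ Hodd Hl).
Qed.

Lemma is_RInt_line_std_normal_kernel :
  is_RInt_line (fun w => std_normal w * cauchy_kernel se (th0 - (s0 * w + th0)))
    (erfcx (se / s0 / sqrt 2) / (s0 * sqrt (2 * PI))).
Proof.
  assert (Ha : 0 < se / s0) by (apply Rdiv_lt_0_compat; auto).
  pose proof PI_RGT_0. pose proof sqrt_2PI_pos.
  replace (erfcx (se / s0 / sqrt 2) / (s0 * sqrt (2 * PI)))
    with (/ sqrt (2 * PI) * (se / (PI * s0 ^ 2)) * (PI * erfcx (se / s0 / sqrt 2) / (se / s0)))
    by (field; repeat split; lra).
  apply (is_RInt_line_ext (fun w => / sqrt (2 * PI) * (se / (PI * s0 ^ 2))
                                    * (exp (- w ^ 2 / 2) / ((se / s0) ^ 2 + w ^ 2)))).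
  { intros w. rewrite cauchy_kernel_at_prior_mean. unfold std_normal.
    field. repeat split; nra. }
  apply is_RInt_line_scal, is_RInt_line_gauss_cauchy, Ha.
Qed.

Lemma is_RInt_line_affine_std_normal_kernel :
  is_RInt_line (fun w => (s0 * w + th0) * std_normal w * cauchy_kernel se (th0 - (s0 * w + th0)))
    (th0 * (erfcx (se / s0 / sqrt 2) / (s0 * sqrt (2 * PI))) + s0 * 0).
Proof.
  apply (is_RInt_line_ext (fun w => th0 * (std_normal w * cauchy_kernel se (th0 - (s0 * w + th0)))
     + s0 * ((1 * w + 0) * std_normal w * cauchy_kernel se (th0 - (s0 * w + th0)))));
    [intros; ring|].
  apply is_RInt_line_plus, is_RInt_line_scal;
    [apply is_RInt_line_scal, is_RInt_line_std_normal_kernel|].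
  apply (is_RInt_line_odd_shift _ _ (21 * (Rabs 1 + Rabs 0) / sqrt (2 * PI)) (/ (PI * se)));
    auto using continuous_affine_std_normal, affine_std_normal_bound,
               continuous_cauchy_kernel, cauchy_kernel_bound.
  intros w. rewrite !cauchy_kernel_at_prior_mean. unfold std_normal.
  replace ((- w) ^ 2) with (w ^ 2) by ring. ring.
Qed.

Lemma is_RInt_line_std_normal_kernel' :
  is_RInt_line (fun w => std_normal w * cauchy_kernel' se (th0 - (s0 * w + th0))) 0.
Proof.
  apply (is_RInt_line_odd_shift _ _ (21 / sqrt (2 * PI)) (/ (PI * se ^ 2)));
    auto using continuous_std_normal, std_normal_bound,
               continuous_cauchy_kernel', cauchy_kernel'_bound.
  intros w. rewrite !cauchy_kernel'_at_prior_mean. unfold std_normal.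
  replace ((- w) ^ 2) with (w ^ 2) by ring. field.
  pose proof PI_RGT_0. pose proof sqrt_2PI_pos. repeat split; nra.
Qed.

Lemma is_RInt_line_affine_std_normal_kernel' :
  is_RInt_line (fun w => (s0 * w + th0) * std_normal w * cauchy_kernel' se (th0 - (s0 * w + th0)))
    (((1 + (se / s0) ^ 2) * erfcx (se / s0 / sqrt 2) - sqrt (2 / PI) * (se / s0))
     / (s0 * sqrt (2 * PI))).
Proof.
  assert (Ha : 0 < se / s0) by (apply Rdiv_lt_0_compat; auto).
  pose proof PI_RGT_0. pose proof sqrt_2PI_pos.
  assert (E : sqrt (2 / PI) = sqrt (2 * PI) / PI).
  { apply sqrt_lem_1; [apply Rdiv_le_0_compat; lra | apply Rdiv_le_0_compat; lra|].
    replace (sqrt (2 * PI) / PI * (sqrt (2 * PI) / PI))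
      with (sqrt (2 * PI) * sqrt (2 * PI) / (PI * PI)) by (field; lra).
    rewrite sqrt_sqrt by lra. field. lra. }
  replace (((1 + (se / s0) ^ 2) * erfcx (se / s0 / sqrt 2) - sqrt (2 / PI) * (se / s0))
           / (s0 * sqrt (2 * PI)))
    with (th0 * 0 + s0 * (/ sqrt (2 * PI) * (2 * se / (PI * s0 ^ 3))
          * (((1 + (se / s0) ^ 2) * (PI * erfcx (se / s0 / sqrt 2) / (se / s0))
              - sqrt (2 * PI)) / 2)))
    by (rewrite E; field; repeat split; lra).
  apply (is_RInt_line_ext (fun w => th0 * (std_normal w * cauchy_kernel' se (th0 - (s0 * w + th0)))
     + s0 * (/ sqrt (2 * PI) * (2 * se / (PI * s0 ^ 3))
             * (w ^ 2 * exp (- w ^ 2 / 2) / ((se / s0) ^ 2 + w ^ 2) ^ 2)))).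
  { intros w. rewrite cauchy_kernel'_at_prior_mean. unfold std_normal.
    field. repeat split; nra. }
  apply is_RInt_line_plus, is_RInt_line_scal;
    [apply is_RInt_line_scal, is_RInt_line_std_normal_kernel'|].
  apply is_RInt_line_scal, is_RInt_line_gauss_cauchy_sq, Ha.
Qed.

End PosteriorAtPriorMean.

Theorem mainTheorem6 (s0 se th0 : R) (hs0 : 0 < s0) (hse : 0 < se) :
  is_derive (posterior_mean th0 s0 se) th0
    (1 + (se / s0) ^ 2
     - sqrt (2 / PI) * (se / s0) / erfcx ((se / s0) / sqrt 2)).
Proof.
  pose proof sqrt_2PI_pos.
  assert (HE : 0 < erfcx (se / s0 / sqrt 2)).
  { apply erfcx_pos, Rdiv_lt_0_compat; [apply Rdiv_lt_0_compat|apply sqrt_lt_R0]; lra. }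
  apply (is_derive_ext (fun x =>
           smoothed s0 th0 (cauchy_kernel se) (fun w => (s0 * w + th0) * std_normal w) x
           / smoothed s0 th0 (cauchy_kernel se) std_normal x)).
  { intros x. symmetry. apply posterior_mean_smoothed; auto. }
  assert (HD0 := integral_R_unique _ _ (is_RInt_line_std_normal_kernel s0 se th0 hs0 hse)).
  assert (HN0 := integral_R_unique _ _
                   (is_RInt_line_affine_std_normal_kernel s0 se th0 hs0 hse)).
  assert (HD1 := integral_R_unique _ _ (is_RInt_line_std_normal_kernel' s0 se th0 hs0 hse)).
  assert (HN1 := integral_R_unique _ _
                   (is_RInt_line_affine_std_normal_kernel' s0 se th0 hs0 hse)).
  eapply is_derive_eq; [apply is_derive_div|].
  - apply (is_derive_smoothed _ _ _ hse _ (21 * (Rabs s0 + Rabs th0) / sqrt (2 * PI)));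
      auto using continuous_affine_std_normal, affine_std_normal_bound.
  - apply (is_derive_smoothed _ _ _ hse _ (21 / sqrt (2 * PI)));
      auto using continuous_std_normal, std_normal_bound.
  - unfold smoothed. rewrite HD0.
    apply Rgt_not_eq, Rdiv_lt_0_compat; [|apply Rmult_lt_0_compat]; lra.
  - unfold smoothed. rewrite HN0, HD0, HN1, HD1. field. lra.
Qed.
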